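(* Let $\mathbf p,\mathbf q,\mathbf r,\mathbf s$ be words, $x,y$ letters, and $\mathbf w=\mathbf pxy\mathbf qx\mathbf ry\mathbf s$. If every letter occurring in $\mathbf r$ occurs at least twice in $\mathbf w$, then $\mathbf D_{15}$ satisfies the identity $\mathbf w\approx\mathbf pyx\mathbf qx\mathbf ry\mathbf s$.
   Context: Words are elements of the free monoid over a countably infinite alphabet; distinct symbols below are distinct letters. $\prod$ denotes concatenation in increasing index order; $\operatorname{var}\Sigma$ is the monoid variety defined by identities $\Sigma$. $S_N$ is the symmetric group on $\{1,\dots,N\}$, $i\tau$ the image of $i$. For $n,m,k\in\mathbb N$, $\tau\in S_{n+m+k}$: $\mathbf c_{n,m,k}[\tau]=\bigl(\prod_{i=1}^n z_it_i\bigr)xyt\bigl(\prod_{i=n+1}^{n+m} z_it_i\bigr)x\bigl(\prod_{i=1}^{n+m+k-1} z_{i\tau}y_i^2\bigr)z_{(n+m+k)\tau}y\bigl(\prod_{i=n+m+1}^{n+m+k} t_iz_i\bigr)$; $\mathbf c'_{n,m,k}[\tau]$ is obtained by swapping the first occurrences of $x$ and $y$; $\mathbf d_{n,m,k}[\tau]$, $\mathbf d'_{n,m,k}[\tau]$ are $\mathbf c_{n,m,k}[\tau]$, $\mathbf c'_{n,m,k}[\tau]$ read right to left. $\Phi_1$ is the set of all identities $\mathbf c_{n,m,k}[\tau]\approx\mathbf c'_{n,m,k}[\tau]$, $\mathbf d_{n,m,k}[\tau]\approx\mathbf d'_{n,m,k}[\tau]$. $\mathbf D_{15}=\operatorname{var}\{\Phi_1,\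 xyx\approx x^2yx,\ xyx\approx xyx^2,\ (xy)^2\approx(yx)^2\}$. *)

From mathcomp Require Import all_boot all_fingroup.
Unset Printing Implicit Defensive.

Definition word := seq nat.

Record monoid := Monoid {
  mcarrier :> Type;
  mop : mcarrier -> mcarrier -> mcarrier;
  mone : mcarrier;
  mopA : forall a b c, mop a (mop b c) = mop (mop a b) c;
  mop1l : forall a, mop mone a = a;
  mop1r : forall a, mop a mone = a }.

Definition meval (M : monoid) (phi : nat -> M) (w : word) : M :=
  foldr (fun a acc => mop M (phi a) acc) (mone M) w.

Definition msat (M : monoid) (u v : word) : Prop :=
  forall phi : nat -> M, meval M phi u = meval M phi v.

(* Concrete distinct letters: x, y, t, and z_i, t_i, y_i (i >= 1). *)
Definition lx : nat := 0.
Definition ly : nat := 1.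
Definition lt0 : nat := 2.
Definition lz (i : nat) : nat := 3 * i.
Definition lti (i : nat) : nat := 3 * i + 1.
Definition lyi (i : nat) : nat := 3 * i + 2.

(* i tau for i in {1..N}, tau a permutation of 'I_N (i.e. of {0..N-1}). *)
Definition pimg {N : nat} (tau : {perm 'I_N}) (i : nat) : nat :=
  match @insub nat (fun j => j < N) _ i.-1 with
  | Some j => (tau j).+1
  | None => 0
  end.

(* c_{n,m,k}[tau] ; the first occurrences block is [:: x; y] or [:: y; x]. *)
Definition cword (first : word) (n m k : nat) (tau : {perm 'I_(n + m + k)}) : word :=
  let N := n + m + k in
  flatten [seq [:: lz i; lti i] | i <- iota 1 n]
  ++ first ++ [:: lt0]
  ++ flatten [seq [:: lz i; lti i] | i <- iota n.+1 m]
  ++ [:: lx]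
  ++ flatten [seq [:: lz (pimg tau i); lyi i; lyi i] | i <- iota 1 N.-1]
  ++ [:: lz (pimg tau N); ly]
  ++ flatten [seq [:: lti i; lz i] | i <- iota (n + m).+1 k].

Definition c_w n m k tau : word := cword [:: lx; ly] n m k tau.
Definition c'_w n m k tau : word := cword [:: ly; lx] n m k tau.
Definition d_w n m k tau : word := rev (c_w n m k tau).
Definition d'_w n m k tau : word := rev (c'_w n m k tau).

Definition D15_axiom (u v : word) : Prop :=
  (exists (n m k : nat) (tau : {perm 'I_(n + m + k)}),
      0 < n + m + k /\
      ((u = c_w n m k tau /\ v = c'_w n m k tau) \/
       (u = d_w n m k tau /\ v = d'_w n m k tau)))
  \/ (u = [:: lx; ly; lx] /\ v = [:: lx; lx; ly; lx])
  \/ (u = [:: lx; ly; lx] /\ v = [:: lx; ly; lx; lx])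
  \/ (u = [:: lx; ly; lx; ly] /\ v = [:: ly; lx; ly; lx]).

Definition D15_satisfies (u v : word) : Prop :=
  forall M : monoid, (forall u' v', D15_axiom u' v' -> msat M u' v') -> msat M u v.

From Pilot Require Import Defs.
From mathcomp Require Import all_boot all_fingroup.
From mathcomp Require Import zify.

(* Every letter of r occurs twice in w, so xyx = x^2yx and xyx = xyx^2 replace
   each letter a of r by a^2 in both words.  Then w reads p xy q x (prod a_i^2) y s,
   and xy q x (prod a_i^2) y is the image of c_{0,0,|r|+1}[id] under x |-> x,
   y |-> y, t |-> q, y_i |-> a_i, all other letters |-> 1; the identity c ~ c'
   swaps xy there. *)

Lemma meval_cat (M : monoid) (f : nat -> M) (u v : word) :
  meval M f (u ++ v) = mop M (meval M f u) (meval M f v).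
Proof. by elim: u => [|a u IH] /=; rewrite ?mop1l // IH mopA. Qed.

Definition subst (sigma : nat -> word) (w : word) : word := flatten (map sigma w).

Lemma subst_cat sigma (u v : word) : subst sigma (u ++ v) = subst sigma u ++ subst sigma v.
Proof. by rewrite /subst map_cat flatten_cat. Qed.

Lemma subst_flatten_map (T : Type) sigma (F : T -> word) (s : seq T) :
  subst sigma (flatten (map F s)) = flatten [seq subst sigma (F i) | i <- s].
Proof. by elim: s => [|i s IH] //=; rewrite subst_cat IH. Qed.

Lemma meval_subst (M : monoid) (f : nat -> M) sigma (w : word) :
  meval M f (subst sigma w) = meval M (fun a => meval M f (sigma a)) w.
Proof. by elim: w => [|a w IH] //=; rewrite meval_cat IH. Qed.

Section Satisfaction.

Context {M : monoid}.

Lemma msat_sym {u v : word} : msat M u v -> msat M v u.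
Proof. by move=> uv phi; rewrite uv. Qed.

Lemma msat_trans {u v w : word} : msat M u v -> msat M v w -> msat M u w.
Proof. by move=> uv vw phi; rewrite uv vw. Qed.

Lemma msat_catl (u : word) {v v' : word} : msat M v v' -> msat M (u ++ v) (u ++ v').
Proof. by move=> vv' phi; rewrite !meval_cat vv'. Qed.

Lemma msat_catr (v : word) {u u' : word} : msat M u u' -> msat M (u ++ v) (u' ++ v).
Proof. by move=> uu' phi; rewrite !meval_cat uu'. Qed.

Lemma msat_subst sigma {u v : word} : msat M u v -> msat M (subst sigma u) (subst sigma v).
Proof. by move=> uv phi; rewrite !meval_subst uv. Qed.

End Satisfaction.

Definition square_letters (r : word) : word := flatten [seq [:: a; a] | a <- r].

Definition subst_xy (a : nat) (w : word) (b : nat) : word := if b == lx then [:: a] else w.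

Section Squaring.

Context {M : monoid}.
Hypothesis sq_first : msat M [:: lx; ly; lx] [:: lx; lx; ly; lx].
Hypothesis sq_last : msat M [:: lx; ly; lx] [:: lx; ly; lx; lx].

Lemma msat_square_letter (u : word) (a : nat) (v : word) :
  2 <= count_mem a (u ++ a :: v) -> msat M (u ++ a :: v) (u ++ a :: a :: v).
Proof.
move=> twice; have : 0 < count_mem a (u ++ v).
  by move: twice; rewrite !count_cat /= eqxx; lia.
rewrite -has_count has_pred1 mem_cat => /orP[].
- case/splitPr=> u1 u2; rewrite -!catA; apply: msat_catl.
  have := msat_catr v (msat_subst (subst_xy a u2) sq_last).
  by rewrite /subst /subst_xy /= -!catA.
- case/splitPr=> v1 v2; apply: msat_catl.
  have := msat_catr v2 (msat_subst (subst_xy a v1) sq_first).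
  by rewrite /subst /subst_xy /= -!catA.
Qed.

Lemma msat_square_letters (u r v : word) :
  (forall a, a \in r -> 2 <= count_mem a (u ++ r ++ v)) ->
  msat M (u ++ r ++ v) (u ++ square_letters r ++ v).
Proof.
elim: r u => [|a r IH] u twice /=; first by move=> phi.
apply: msat_trans (msat_square_letter _ _ _ (twice a (mem_head a r))) _.
have -> : u ++ a :: a :: r ++ v = (u ++ [:: a; a]) ++ r ++ v by rewrite -catA.
apply: msat_trans (IH _ _) _; last by rewrite -catA => phi.
move=> b rb; have := twice b; rewrite in_cons rb orbT => /(_ isT).
by rewrite !count_cat /=; case: (a == b) => /=; lia.
Qed.

End Squaring.

Lemma pimg_gt0 (N : nat) (tau : {perm 'I_N}) (i : nat) : 0 < i <= N -> 0 < pimg tau i.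
Proof. by move=> /andP[i_gt0 i_le]; rewrite /pimg; case: insubP => //=; lia. Qed.

(* Defs encodes x, y, t as 0, 1, 2 and y_i as 3i+2; the z_i = 3i and t_i = 3i+1
   are erased. *)
Definition c_subst (x y : nat) (q r : word) (a : nat) : word :=
  if a < 3 then nth [::] [:: [:: x]; [:: y]; q] a
  else if a %% 3 == 2 then [:: nth x r (a %/ 3).-1] else [::].

Section CWordImage.

Variables (x y : nat) (q r : word).

Lemma c_subst_indexed (i k : nat) : 0 < i -> k < 3 ->
  c_subst x y q r (3 * i + k) = if k == 2 then [:: nth x r i.-1] else [::].
Proof.
move=> i_gt0 k_lt3; rewrite /c_subst ifN; last by lia.
have -> : (3 * i + k) %% 3 = k by lia.
by have -> : (3 * i + k) %/ 3 = i by lia.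
Qed.

Lemma c_subst_lz (i : nat) : 0 < i -> c_subst x y q r (lz i) = [::].
Proof. by move=> i_gt0; rewrite /lz -[3 * i]addn0 c_subst_indexed. Qed.

Lemma c_subst_lti (i : nat) : 0 < i -> c_subst x y q r (lti i) = [::].
Proof. by move=> i_gt0; rewrite /lti c_subst_indexed. Qed.

Lemma c_subst_lyi (i : nat) : 0 < i -> c_subst x y q r (lyi i) = [:: nth x r i.-1].
Proof. by move=> i_gt0; rewrite /lyi c_subst_indexed. Qed.

Lemma subst_cword (first : word) :
  subst (c_subst x y q r) (cword first 0 0 (size r).+1 1%g) =
  subst (c_subst x y q r) first ++ q ++ x :: square_letters r ++ [:: y].
Proof.
set sigma := c_subst x y q r; set tau : {perm 'I_(size r).+1} := 1%g.
have y_block : subst sigma (flatten [seq [:: lz (pimg tau i); lyi i; lyi i]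
                                     | i <- iota 1 (size r)]) = square_letters r.
  rewrite subst_flatten_map /square_letters -[in RHS](mkseq_nth x r) /mkseq.
  rewrite -[1]/(1 + 0) iotaDl -!map_comp; congr flatten; apply/eq_in_map => i.
  rewrite mem_iota add0n => /andP[_ i_lt] /=.
  by rewrite /subst /sigma /= c_subst_lz ?c_subst_lyi ?pimg_gt0 //=; lia.
have last_y : subst sigma [:: lz (pimg tau (size r).+1); ly] = [:: y].
  by rewrite /subst /sigma /= c_subst_lz // pimg_gt0 //= leqnn.
have t_block : subst sigma (flatten [seq [:: lti i; lz i] | i <- iota 1 (size r).+1]) = [::].
  rewrite subst_flatten_map (_ : map _ _ = map (fun=> [::]) (iota 1 (size r).+1)).
    by elim: (iota _ _).
  apply/eq_in_map => i; rewrite mem_iota => /andP[i_gt0 _].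
  by rewrite /subst /sigma /= c_subst_lti ?c_subst_lz.
rewrite (_ : cword first 0 0 (size r).+1 tau =
  first ++ [:: lt0; lx] ++ flatten [seq [:: lz (pimg tau i); lyi i; lyi i] | i <- iota 1 (size r)]
  ++ [:: lz (pimg tau (size r).+1); ly] ++ flatten [seq [:: lti i; lz i] | i <- iota 1 (size r).+1]) //.
move: (flatten [seq [:: lti i; lz i] | i <- _]) t_block => t_word t_empty.
by rewrite !subst_cat y_block last_y t_empty /subst /= -catA.
Qed.

End CWordImage.

Lemma msat_swap_xy_square_letters (M : monoid) (x y : nat) (q r : word) :
  (forall k, msat M (c_w 0 0 k.+1 1%g) (c'_w 0 0 k.+1 1%g)) ->
  msat M (x :: y :: q ++ x :: square_letters r ++ [:: y])
         (y :: x :: q ++ x :: square_letters r ++ [:: y]).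
Proof.
move=> c_c'; have := msat_subst (c_subst x y q r) (c_c' (size r)).
by rewrite /c_w /c'_w !subst_cword.
Qed.

Theorem lemma6p2 (p q r s : word) (x y : nat) :
  x != y ->
  (forall a, a \in r -> 2 <= count_mem a (p ++ x :: y :: q ++ x :: r ++ y :: s)) ->
  D15_satisfies (p ++ x :: y :: q ++ x :: r ++ y :: s)
                (p ++ y :: x :: q ++ x :: r ++ y :: s).
Proof.
(* For x = y the two words coincide. *)
move=> _ r_twice M D15M.
have sq_first : msat M [:: lx; ly; lx] [:: lx; lx; ly; lx] by apply: D15M; right; left.
have sq_last : msat M [:: lx; ly; lx] [:: lx; ly; lx; lx] by apply: D15M; right; right; left.
have c_c' k : msat M (c_w 0 0 k.+1 1%g) (c'_w 0 0 k.+1 1%g).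
  by apply: D15M; left; exists 0, 0, k.+1, 1%g; split => //; left.
have split_w a b : p ++ a :: b :: q ++ x :: r ++ y :: s
                   = (p ++ a :: b :: q ++ [:: x]) ++ r ++ y :: s by rewrite -catA /= -catA.
have join_w a b : (p ++ a :: b :: q ++ [:: x]) ++ square_letters r ++ y :: s
                  = p ++ (a :: b :: q ++ x :: square_letters r ++ [:: y]) ++ s.
  by rewrite -catA /= -!catA /= -catA.
rewrite !split_w; apply: msat_trans (msat_square_letters sq_first sq_last _ _ _ _) _.
  by rewrite -split_w.
apply: msat_trans (msat_sym (msat_square_letters sq_first sq_last _ _ _ _)).
  by rewrite !join_w; apply/msat_catl/msat_catr/msat_swap_xy_square_letters.
by move=> a /r_twice; rewrite -split_w !count_cat /=; lia.
Qed.
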